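(* Assume every $f_i$ ($i=1,\dots,q$) and every $g_j$ ($j=1,\dots,m$) is Lipschitz continuous with respect to the continuous variables. Let $x^\star\in\mathcal F$ be a local Pareto optimum of problem (P). Assume that there exists a direction $d\in D^c(x^\star)$ such that, for every $j\in\{1,\dots,m\}$ with $g_j(x^\star)=0$, $$(\xi^{g_j})^\top d<0\quad\text{for all }\xi^{g_j}\in\partial_c g_j(x^\star).$$ Then $x^\star$ is a Pareto stationary point of problem (P).
   Context: Fix integers $n,q\ge 1$ and $m\ge 0$. Let $\{1,\dots,n\}=I^c\cup I^z$ with $I^c\cap I^z=\emptyset$ and $I^c,I^z\neq\emptyset$. For $x\in\mathbb R^n$ write $x_c=(x_i)_{i\in I^c}$ and $x_z=(x_i)_{i\in I^z}$. Let $l,u\in\mathbb R^n$ with $l_i<u_i$ for all $i$ and $l_i,u_i\in\mathbb Z$ for $i\in I^z$. Put $X=\{x\in\mathbb R^n: l_i\le x_i\le u_i,\ i=1,\dots,n\}$ and $\mathcal Z=\{x\in\mathbb R^n: x_i\in\mathbb Z \text{ for } i\in I^z\}$. Let $f_1,\dots,f_q,g_1,\dots,g_m:\mathbb R^n\to\mathbb R$ and $F=(f_1,\dots,f_q)^\top$. Problem (P) is: minimize $F(x)$ subject to $g_j(x)\le 0$ ($j=1,\dots,m$), $x\in X\cap\mathcal Z$; its feasible set is $\mathcal F=\{x\in X\cap\mathcal Z: g_j(x)\le 0,\ j=1,\dots,m\}$. A function $h:\mathbb R^n\to\mathbb R$ is Lipschitz continuous with respect to the continuous variables if there is $L_h$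 with $|h(x)-h(y)|\le L_h\|x-y\|$ for all $x,y\in\mathbb R^n$ with $x_i=y_i$ for all $i\in I^z$. For such $h$, $x\in\mathbb R^n$ and $s\in\mathbb R^n$ with $s_i=0$ for $i\in I^z$, the generalized directional derivative is $h^{Cl}_c(x;s)=\limsup_{y_c\to x_c,\ y_z=x_z,\ t\downarrow 0}\frac{h(y+ts)-h(y)}{t}$, and the generalized gradient with respect to the continuous variables is $\partial_c h(x)=\{v\in\mathbb R^n: v_i=0\ \forall i\in I^z,\ h^{Cl}_c(x;s)\ge s^\top v\ \forall s\in\mathbb R^n \text{ with } s_i=0\ \forall i\in I^z\}$. For $x\in X\cap\mathcal Z$, the cone of feasible continuous directions is $D^c(x)=\{s\in\mathbb R^n: s_i=0\ (i\in I^z);\ s_i\ge 0\ (i\in I^c,\ x_i=l_i);\ s_i\le 0\ (i\in I^c,\ x_i=u_i);\ s_i\in\mathbb R\ (i\in I^c,\ l_i<x_i<u_i)\}$. Vector order: for $a,b\in\mathbb R^q$, $a\le b$ means $a_i\le b_i$ for all $i$ and $a\ne b$. For $x\in X\cap\mathcal Z$, the set of feasible primitive directions is $D^z(x)=\{d\in\mathbb Z^n: d_i=0\ \forall i\in I^c,\ \gcd\{d_i: i\in I^z\}=1,\ x+d\in X\cap\mathcal Z\}$; the discrete neighborhood is $\mathcal B^z(x)=\{x+d: d\in D^z(x)\}$, and for $\rho>0$ the continuous neighborhood is $\mathcal B^c(x;\rho)=\{y\in X: y_z=x_z,\ \|y_c-x_c\|\le\rho\}$. A point $x^\star\in\mathcal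 F$ is a local Pareto optimum of (P) if (1) there is no $y\in\mathcal B^z(x^\star)\cap\mathcal F$ with $F(y)\le F(x^\star)$, and (2) for some $\rho>0$ there is no $y\in\mathcal B^c(x^\star;\rho)\cap\mathcal F$ with $F(y)\le F(x^\star)$. A point $x^\star\in\mathcal F$ is Pareto-Clarke stationary w.r.t. the continuous variables for (P) if there exist $\sigma\in\mathbb R^q$ with $\sigma\ge 0$ componentwise and $\sigma\ne 0$, and $\lambda\in\mathbb R^m$ with $\lambda_j\ge0$ and $\lambda_j g_j(x^\star)=0$ for all $j$, and a vector $\bar\xi\in\sum_{i=1}^q\sigma_i\partial_c f_i(x^\star)+\sum_{j=1}^m\lambda_j\partial_c g_j(x^\star)$ (Minkowski sum) such that $\bar\xi^\top d\ge 0$ for every $d\in D^c(x^\star)$. A point $x^\star\in\mathcal F$ is Pareto stationary for (P) if it is Pareto-Clarke stationary w.r.t. the continuous variables and satisfies condition (1) of local Pareto optimality (no $y\in\mathcal B^z(x^\star)\cap\mathcal F$ with $F(y)\le F(x^\star)$). *)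

From HB Require Import structures.
From mathcomp Require Import all_boot all_order all_algebra.
From mathcomp Require Import reals.
Set Implicit Arguments. Unset Strict Implicit. Unset Printing Implicit Defensive.
Import Order.TTheory GRing.Theory Num.Theory.
Local Open Scope ring_scope.

Section Defs.
Variables (R : realType) (n : nat).
Implicit Types (x y s v l u : 'I_n -> R) (Iz : {set 'I_n}).

Definition vnorm x : R := Num.sqrt (\sum_(i < n) x i ^+ 2).
Definition vdot x y : R := \sum_(i < n) x i * y i.
Definition vadd x y : 'I_n -> R := fun i => x i + y i.
Definition vsub x y : 'I_n -> R := fun i => x i - y i.
Definition vscale (a : R) x : 'I_n -> R := fun i => a * x i.

Definition same_z Iz x y : Prop := forall i, i \in Iz -> x i = y i.
Definition cont_dir Iz s : Prop := forall i, i \in Iz -> s i = 0.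

Definition lipschitz_c Iz (h : ('I_n -> R) -> R) : Prop :=
  exists L : R, forall x y, same_z Iz x y -> `|h x - h y| <= L * vnorm (vsub x y).

(* "h^Cl_c(x;s) >= c", i.e. limsup_{y_c -> x_c, y_z = x_z, t \downarrow 0}
   (h(y+ts)-h(y))/t >= c, with the limsup unfolded: every neighbourhood
   contains quotient values exceeding c - eps. *)
Definition clarke_ge Iz (h : ('I_n -> R) -> R) x s (c : R) : Prop :=
  forall eps delta : R, 0 < eps -> 0 < delta ->
    exists y (t : R), [/\ same_z Iz y x, vnorm (vsub y x) < delta, 0 < t, t < delta &
      c - eps < (h (vadd y (vscale t s)) - h y) / t].

Definition gen_grad_c Iz (h : ('I_n -> R) -> R) x v : Prop :=
  cont_dir Iz v /\ forall s, cont_dir Iz s -> clarke_ge Iz h x s (vdot s v).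

Definition in_box l u x : Prop := forall i, l i <= x i <= u i.
Definition int_on Iz x : Prop := forall i, i \in Iz -> exists z : int, x i = z%:~R.

Definition feasible Iz l u m (g : 'I_m -> ('I_n -> R) -> R) x : Prop :=
  [/\ in_box l u x, int_on Iz x & forall j, g j x <= 0].

Definition Dc Iz l u x s : Prop :=
  cont_dir Iz s /\
  forall i, i \notin Iz ->
    (x i = l i -> 0 <= s i) /\ (x i = u i -> s i <= 0).

Definition Dz Iz l u x (d : 'I_n -> int) : Prop :=
  [/\ forall i, i \notin Iz -> d i = 0,
      \big[gcdz/0]_(i in Iz) d i = 1 &
      in_box l u (fun i => x i + (d i)%:~R) /\
      int_on Iz (fun i => x i + (d i)%:~R)].

Definition Bz Iz l u x y : Prop :=
  exists d, Dz Iz l u x d /\ y = (fun i => x i + (d i)%:~R).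

Definition Bc Iz l u x (rho : R) y : Prop :=
  [/\ in_box l u y, same_z Iz y x & vnorm (vsub y x) <= rho].

End Defs.

Definition vle (R : realType) q (a b : 'I_q -> R) : Prop :=
  (forall i, a i <= b i)%R /\ a <> b.

Section Opt.
Local Open Scope ring_scope.
Variables (R : realType) (n q m : nat) (Iz : {set 'I_n}) (l u : 'I_n -> R)
  (F : 'I_q -> ('I_n -> R) -> R) (g : 'I_m -> ('I_n -> R) -> R).

Definition Fval (x : 'I_n -> R) : 'I_q -> R := fun i => F i x.

Definition no_better_discrete (xs : 'I_n -> R) : Prop :=
  ~ exists y, Bz Iz l u xs y /\ feasible Iz l u g y /\ vle (Fval y) (Fval xs).

Definition local_pareto_opt (xs : 'I_n -> R) : Prop :=
  [/\ feasible Iz l u g xs,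
      no_better_discrete xs &
      exists rho : R, 0 < rho /\
        ~ exists y, Bc Iz l u xs rho y /\ feasible Iz l u g y /\ vle (Fval y) (Fval xs)].

Definition pareto_clarke_stationary (xs : 'I_n -> R) : Prop :=
  feasible Iz l u g xs /\
  exists (sigma : 'I_q -> R) (lam : 'I_m -> R),
    [/\ forall i, 0 <= sigma i,
        sigma <> (fun _ => 0),
        forall j, 0 <= lam j /\ lam j * g j xs = 0 &
        exists (vf : 'I_q -> 'I_n -> R) (vg : 'I_m -> 'I_n -> R),
          [/\ forall i, gen_grad_c Iz (F i) xs (vf i),
              forall j, gen_grad_c Iz (g j) xs (vg j) &
              let xi := fun k => \sum_(i < q) sigma i * vf i k
                               + \sum_(j < m) lam j * vg j k in
              forall d, Dc Iz l u xs d -> 0 <= vdot xi d]].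

Definition pareto_stationary (xs : 'I_n -> R) : Prop :=
  pareto_clarke_stationary xs /\ no_better_discrete xs.

End Opt.

From mathcomp Require Import all_boot all_order all_algebra.
From mathcomp Require Import reals.
From mathcomp Require Import boolp ring lra.
From mathcomp Require classical_sets.
Import Order.TTheory GRing.Theory Num.Theory.
Local Open Scope ring_scope.

(* Along a direction d of D^c(xs) small steps stay in the box, in the continuous neighbourhood
   and strictly feasible for the inactive constraints, so local Pareto optimality forbids the
   Clarke derivatives h_k°(xs; d) of all objectives and active constraints to be negative at
   once. Adding a Lipschitz-weighted distance pen(b) to the cone D^c(xs) extends this to every
   direction: max_k h_k°(xs; b) + pen(b) >= 0. Hahn-Banach in finite dimension, applied to the
   sublinear function (c, r, b) |-> max_k [h_k°(xs; c_k + b) + r_k] + pen(b), produces weights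
   mu_k >= 0 summing to 1 and supported on the active indices, together with Clarke
   subgradients whose weighted sum is nonnegative on D^c(xs). The constraint qualification
   rules out that all the weight sits on the constraints. *)

Set Implicit Arguments. Unset Strict Implicit. Unset Printing Implicit Defensive.

Section VectorNorms.
Variables (R : realType) (n : nat).
Implicit Types (v w x y s : 'I_n -> R).

Definition l1norm v : R := \sum_(i < n) `|v i|.

Lemma l1norm_ge0 v : 0 <= l1norm v.
Proof. by apply: sumr_ge0 => i _; exact: normr_ge0. Qed.

Lemma vnorm_ge0 v : 0 <= vnorm v.
Proof. exact: sqrtr_ge0. Qed.

Lemma normr_le_vnorm v i : `|v i| <= vnorm v.
Proof.
rewrite /vnorm -sqrtr_sqr ler_sqrt; last by apply: sumr_ge0 => j _; exact: sqr_ge0.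
by rewrite (bigD1 i) //= lerDl; apply: sumr_ge0 => j _; exact: sqr_ge0.
Qed.

Lemma vnorm_le_l1norm v : vnorm v <= l1norm v.
Proof.
rewrite /vnorm -(ger0_norm (l1norm_ge0 v)) -sqrtr_sqr ler_sqrt; last exact: sqr_ge0.
rewrite expr2 /l1norm mulr_suml; apply: ler_sum => i _.
rewrite -[v i ^+ 2]real_normK ?num_real // expr2 ler_wpM2l //.
by rewrite (bigD1 i) //= lerDl; apply: sumr_ge0 => j _; exact: normr_ge0.
Qed.

Lemma l1norm_le_vnorm v : l1norm v <= n%:R * vnorm v.
Proof.
rewrite -[n in n%:R]card_ord mulr_natl -sumr_const.
by apply: ler_sum => i _; exact: normr_le_vnorm.
Qed.

Lemma l1normD v w : l1norm (vadd v w) <= l1norm v + l1norm w.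
Proof. by rewrite /l1norm -big_split /=; apply: ler_sum => i _; exact: ler_normD. Qed.

Lemma vnormZ a v : vnorm (vscale a v) = `|a| * vnorm v.
Proof.
rewrite /vnorm /vscale; under eq_bigr do rewrite exprMn.
by rewrite -mulr_sumr sqrtrM ?sqrtr_sqr //; exact: sqr_ge0.
Qed.

Lemma vnorm_eq0 v : (forall i, v i = 0) -> vnorm v = 0.
Proof. by move=> v0; rewrite /vnorm big1 ?sqrtr0 // => i _; rewrite v0 expr0n. Qed.

Lemma vsub_vaddK y t s : vsub (vadd y (vscale t s)) y = vscale t s.
Proof. by apply: funext => i; rewrite /vsub /vadd addrAC subrr add0r. Qed.

(* The factor n comes from passing through the l1 norm; this crude triangle inequality
   suffices and avoids Cauchy-Schwarz. *)
Lemma vnorm_vadd_vscale_le x y t s : 0 <= t ->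
  vnorm (vsub (vadd y (vscale t s)) x) <= n%:R * (vnorm (vsub y x) + t * vnorm s).
Proof.
move=> t0; have -> : vsub (vadd y (vscale t s)) x = vadd (vsub y x) (vscale t s).
  by apply: funext => i; rewrite /vsub /vadd addrAC.
apply: le_trans (vnorm_le_l1norm _) _; apply: le_trans (l1normD _ _) _.
rewrite mulrDr; apply: lerD; first exact: l1norm_le_vnorm.
by rewrite -{2}(ger0_norm t0) -vnormZ; exact: l1norm_le_vnorm.
Qed.

End VectorNorms.

Section ContinuousDirections.
Variables (R : realType) (n : nat) (Iz : {set 'I_n}).
Implicit Types (y s : 'I_n -> R).

Lemma cont_dirZ a s : cont_dir Iz s -> cont_dir Iz (vscale a s).
Proof. by move=> cs i iz; rewrite /vscale cs // mulr0. Qed.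

Lemma cont_dirD s s' : cont_dir Iz s -> cont_dir Iz s' -> cont_dir Iz (vadd s s').
Proof. by move=> cs cs' i iz; rewrite /vadd cs // cs' // addr0. Qed.

Lemma same_z_vadd y t s : cont_dir Iz s -> same_z Iz (vadd y (vscale t s)) y.
Proof. by move=> cs i iz; rewrite /vadd /vscale cs // mulr0 addr0. Qed.

Definition cont_part s : 'I_n -> R := fun i => if i \in Iz then 0 else s i.

Lemma cont_dir_cont_part s : cont_dir Iz (cont_part s).
Proof. by move=> i iz; rewrite /cont_part iz. Qed.

Lemma cont_part_id s : cont_dir Iz s -> cont_part s = s.
Proof. by move=> cs; apply: funext => i; rewrite /cont_part; case: ifP => // /cs ->. Qed.

Lemma cont_partZ a s : cont_part (vscale a s) = vscale a (cont_part s).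
Proof. by apply: funext => i; rewrite /cont_part /vscale; case: ifP; rewrite ?mulr0. Qed.

Lemma cont_partD s s' : cont_part (vadd s s') = vadd (cont_part s) (cont_part s').
Proof. by apply: funext => i; rewrite /cont_part /vadd; case: ifP; rewrite ?addr0. Qed.

End ContinuousDirections.

Definition near0plus (R : realFieldType) (P : R -> Prop) :=
  exists2 del : R, 0 < del & forall t, 0 < t -> t < del -> P t.

Section Near0plus.
Variable R : realFieldType.
Implicit Types P Q : R -> Prop.

Lemma near0plusI P Q : near0plus P -> near0plus Q -> near0plus (fun t => P t /\ Q t).
Proof.
move=> [d1 d1_gt0 H1] [d2 d2_gt0 H2]; exists (Order.min d1 d2); first by rewrite lt_min d1_gt0.
by move=> t t0; rewrite lt_min => /andP[t1 t2]; split; [exact: H1 | exact: H2].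
Qed.

Lemma near0plus_all (I : finType) (P : I -> R -> Prop) :
  (forall i, near0plus (P i)) -> near0plus (fun t => forall i, P i t).
Proof.
move=> nP; suff [del del0 H] : near0plus (fun t => forall i, i \in enum I -> P i t).
  by exists del => // t t0 tdel i; apply: H => //; rewrite mem_enum.
elim: (enum I) => [|i s IHs]; first by exists 1.
have [del del0 H] := near0plusI (nP i) IHs.
exists del => // t t0 tdel j; rewrite inE => /orP[/eqP -> | js]; first exact: (H t t0 tdel).1.
exact: (H t t0 tdel).2.
Qed.

Lemma near0plus_imply (b : bool) P : (b -> near0plus P) -> near0plus (fun t => b -> P t).
Proof.
case: b => [/(_ isT) [del del0 H] | _]; last by exists 1.
by exists del => // t t0 tdel _; exact: H.
Qed.

Lemma near0plus_affine_ge0 (a b : R) : 0 <= b -> (a < 0 -> 0 < b) ->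
  near0plus (fun t => 0 <= b + t * a).
Proof.
move=> b0 hb; case: (leP 0 a) => ha.
  by exists 1 => // t t0 _; rewrite addr_ge0 // mulr_ge0 // ltW.
have na : 0 < - a by rewrite oppr_gt0.
exists (b / - a); first by rewrite divr_gt0 // hb.
by move=> t t0; rewrite ltr_pdivlMr // => ht; lra.
Qed.

Lemma near0plus_witness P : near0plus P -> exists2 t, 0 < t & P t.
Proof.
move=> [del del0 H]; exists (del / 2); first by rewrite divr_gt0.
by apply: H; [rewrite divr_gt0 | rewrite ltr_pdivrMr // ltr_pMr // ltr1n].
Qed.

End Near0plus.

Section ClarkeDerivative.
Import classical_sets.
Variables (R : realType) (n : nat) (Iz : {set 'I_n}) (h : ('I_n -> R) -> R)
  (xs : 'I_n -> R) (L : R).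
Hypothesis h_lip : forall x y, same_z Iz x y -> `|h x - h y| <= L * vnorm (vsub x y).
Implicit Types (y s : 'I_n -> R) (c t : R).

Local Notation clarke_ge := (clarke_ge Iz h xs).

Definition dquot s y t := (h (vadd y (vscale t s)) - h y) / t.

Lemma dquotD s s' y t :
  dquot (vadd s s') y t = dquot s' (vadd y (vscale t s)) t + dquot s y t.
Proof.
rewrite /dquot -mulrDl addrA subrK; congr ((h _ - _) / _).
by apply: funext => i; rewrite /vadd /vscale mulrDr addrA.
Qed.

Lemma normr_dquot_le s y t : cont_dir Iz s -> 0 < t -> `|dquot s y t| <= L * vnorm s.
Proof.
move=> cs t0; rewrite /dquot normrM normfV (gtr0_norm t0) ler_pdivrMr //.
apply: le_trans (h_lip (same_z_vadd y t cs)) _.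
by rewrite vsub_vaddK vnormZ (gtr0_norm t0) mulrA mulrAC.
Qed.

Lemma clarke_ge_lipschitz s : cont_dir Iz s -> clarke_ge s (- (L * vnorm s)).
Proof.
move=> cs eps del eps0 del0; exists xs, (del / 2); split=> //.
- by rewrite vnorm_eq0 // => i; rewrite /vsub subrr.
- by rewrite divr_gt0.
- by rewrite ltr_pdivrMr // ltr_pMr // ltr1n.
- have := normr_dquot_le xs cs (divr_gt0 del0 (ltr0n _ 2)).
  by rewrite ler_norml => /andP[+ _]; apply: lt_le_trans; rewrite ltrBlDr ltrDl.
Qed.

Lemma clarke_ge_le s c : cont_dir Iz s -> clarke_ge s c -> c <= L * vnorm s.
Proof.
move=> cs hc; rewrite leNgt; apply/negP => hlt.
have eps0 : 0 < (c - L * vnorm s) / 2 by rewrite divr_gt0 // subr_gt0.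
have [y [t [_ _ t0 _ hq]]] := hc _ 1 eps0 ltr01.
have := normr_dquot_le y cs t0; rewrite ler_norml => /andP[_ hle].
have := lt_le_trans hq hle; move: hlt; set Lv := L * vnorm s; lra.
Qed.

Definition clarke_deriv s := sup [set c | clarke_ge s c].

Lemma has_sup_clarke_ge s : cont_dir Iz s -> has_sup [set c | clarke_ge s c].
Proof.
move=> cs; split; first by exists (- (L * vnorm s)); exact: clarke_ge_lipschitz.
by exists (L * vnorm s) => c; exact: clarke_ge_le.
Qed.

Lemma clarke_geP s c : cont_dir Iz s -> clarke_ge s c <-> c <= clarke_deriv s.
Proof.
move=> cs; split=> [|hc]; first exact: (sup_upper_bound (has_sup_clarke_ge cs)).
move=> eps del eps0 del0; have eps2 : 0 < eps / 2 by rewrite divr_gt0.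
have [c' hc' hlt] := sup_adherent eps2 (has_sup_clarke_ge cs).
have [y [t [? ? ? ? hq]]] := hc' _ _ eps2 del0.
exists y, t; split=> //; move: hq hlt hc; rewrite -/(clarke_deriv s).
set Q := (h _ - h y) / t; lra.
Qed.

Lemma clarke_deriv_le s : cont_dir Iz s -> clarke_deriv s <= L * vnorm s.
Proof. by move=> cs; apply: (clarke_ge_le cs); apply/(clarke_geP _ cs). Qed.

Lemma dquot_lt_near s c : cont_dir Iz s -> clarke_deriv s < c ->
  exists2 del, 0 < del & forall y t, same_z Iz y xs -> vnorm (vsub y xs) < del ->
    0 < t -> t < del -> dquot s y t < c.
Proof.
move=> cs hlt; have : ~ clarke_ge s c by move/(clarke_geP _ cs); rewrite leNgt hlt.
move=> /existsNP [eps /existsNP [del /not_implyP [eps0 /not_implyP [del0 H]]]].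
exists del => // y t yz ynear t0 tdel.
have : ~ c - eps < dquot s y t by move=> hq; apply: H; exists y, t.
by move/negP; rewrite -leNgt => /le_lt_trans; apply; rewrite ltrBlDr ltrDl.
Qed.

Lemma clarke_geZ s c a : 0 < a -> clarke_ge s c -> clarke_ge (vscale a s) (a * c).
Proof.
move=> a0 hc eps del eps0 del0; have a_neq0 : a != 0 by rewrite gt_eqF.
have mdel0 : 0 < Order.min del (a * del) by rewrite lt_min del0 mulr_gt0.
have [y [t [yz]]] := hc (eps / a) _ (divr_gt0 eps0 a0) mdel0.
rewrite !lt_min => /andP[ynear _] t0 /andP[_ tdel] hq.
exists y, (t / a); split=> //; first by rewrite divr_gt0.
  by rewrite ltr_pdivrMr // mulrC.
have -> : vadd y (vscale (t / a) (vscale a s)) = vadd y (vscale t s).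
  by apply: funext => i; rewrite /vadd /vscale mulrA divfK.
have -> : a * c - eps = a * (c - eps / a) by rewrite mulrBr mulrCA divff // mulr1.
by rewrite invf_div mulrCA ltr_pM2l.
Qed.

Lemma clarke_derivZ s a : cont_dir Iz s -> 0 < a -> clarke_deriv (vscale a s) = a * clarke_deriv s.
Proof.
move=> cs a0; have cas := cont_dirZ a cs; apply/eqP; rewrite eq_le; apply/andP; split.
  have ai0 : 0 < a^-1 by rewrite invr_gt0.
  have := clarke_geZ ai0 (iffRL (clarke_geP _ cas) (lexx (clarke_deriv (vscale a s)))).
  have -> : vscale a^-1 (vscale a s) = s.
    by apply: funext => i; rewrite /vscale mulrA mulVf ?gt_eqF // mul1r.
  by move/(clarke_geP _ cs); rewrite -(ler_pM2l a0) mulrA divff ?gt_eqF // mul1r.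
by apply/(clarke_geP _ cas); apply: clarke_geZ => //; apply/(clarke_geP _ cs).
Qed.

(* The quotient in direction s + s' at y splits (dquotD) into the quotient in direction s at y
   and in direction s' at y + t s; this shifted base point is still close to xs. *)
Lemma clarke_derivD s s' : cont_dir Iz s -> cont_dir Iz s' ->
  clarke_deriv (vadd s s') <= clarke_deriv s + clarke_deriv s'.
Proof.
move=> cs cs'; rewrite leNgt; apply/negP => hlt.
set e := (clarke_deriv (vadd s s') - (clarke_deriv s + clarke_deriv s')) / 3%:R.
have e0 : 0 < e by rewrite divr_gt0 // subr_gt0.
have near_e r : cont_dir Iz r -> exists2 del, 0 < del & forall y t, same_z Iz y xs ->
    vnorm (vsub y xs) < del -> 0 < t -> t < del -> dquot r y t < clarke_deriv r + e.
  by move=> cr; apply: dquot_lt_near; rewrite ?ltrDl.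
have [[d1 d1_gt0 H1] [d2 d2_gt0 H2]] := (near_e s cs, near_e s' cs').
set K := n%:R * (1 + vnorm s) + 1.
have K_gt0 : 0 < K by rewrite ltr_wpDl // mulr_ge0 // addr_ge0 // vnorm_ge0.
have d_gt0 : 0 < Order.min d1 (Order.min d2 (d2 / K)) by rewrite !lt_min d1_gt0 d2_gt0 divr_gt0.
have [y [t [yz]]] := iffRL (clarke_geP _ (cont_dirD cs cs')) (lexx _) e _ e0 d_gt0.
rewrite !lt_min => /and3P[yd1 _ yd2] t0 /and3P[td1 td2 td2'] hq.
have q1 := H1 y t yz yd1 t0 td1.
suff q2 : dquot s' (vadd y (vscale t s)) t < clarke_deriv s' + e.
  by move: hq q1 q2; rewrite -/(dquot _ _ _) dquotD /e; lra.
apply: H2 => //; first by move=> i iz; rewrite (same_z_vadd y t cs) // yz.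
apply: le_lt_trans (vnorm_vadd_vscale_le _ _ _ (ltW t0)) _.
have hK : d2 / K * K = d2 by rewrite divfK // gt_eqF.
have ht : t * vnorm s <= d2 / K * vnorm s by rewrite ler_wpM2r ?vnorm_ge0 // ltW.
have n0 : 0 <= n%:R :> R by [].
have := ler_wpM2l n0 (lerD (ltW yd2) ht); move: hK (vnorm_ge0 s) (divr_gt0 d2_gt0 K_gt0).
rewrite /K; set D := d2 / K; set v := vnorm (vsub y xs); set N := n%:R; nra.
Qed.

Lemma clarke_deriv_lt0_decrease s : cont_dir Iz s -> clarke_deriv s < 0 ->
  near0plus (fun t => h (vadd xs (vscale t s)) < h xs).
Proof.
move=> cs hlt; have [del del0 H] := dquot_lt_near cs hlt.
exists del => // t t0 tdel.
have := H xs t (fun _ _ => erefl) _ t0 tdel.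
rewrite vnorm_eq0 => [/(_ del0)|i]; last by rewrite /vsub subrr.
by rewrite /dquot pmulr_llt0 ?invr_gt0 // subr_lt0.
Qed.

Lemma lipschitz_lt0_near s : cont_dir Iz s -> h xs < 0 ->
  near0plus (fun t => h (vadd xs (vscale t s)) < 0).
Proof.
move=> cs hx; set K := `|L| * vnorm s + 1.
have K_gt0 : 0 < K by rewrite ltr_wpDl // mulr_ge0 // vnorm_ge0.
exists (- h xs / K); first by rewrite divr_gt0 // oppr_gt0.
move=> t t0; rewrite ltr_pdivlMr // => ht.
have := h_lip (same_z_vadd xs t cs); rewrite vsub_vaddK vnormZ (gtr0_norm t0).
rewrite ler_norml => /andP[_ hle].
have : L * (t * vnorm s) <= t * (`|L| * vnorm s).
  rewrite mulrCA; apply: (ler_wpM2l (ltW t0)); exact: (ler_wpM2r (vnorm_ge0 s) (ler_norm L)).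
move: ht hle t0; rewrite /K; set A := `|L| * vnorm s; nra.
Qed.

End ClarkeDerivative.

Lemma sum_mul_ifeq (R : nzSemiRingType) (I : finType) (f : I -> R) (k : I) (a : R) :
  \sum_(j : I) f j * (if j == k then a else 0) = f k * a.
Proof. by rewrite (bigD1 k) //= eqxx big1 ?addr0 // => j /negbTE ->; rewrite mulr0. Qed.

Section HahnBanach.
Import classical_sets.
Variables (R : realType) (T : finType) (Q : (T -> R) -> R).
Hypothesis QD : forall w w', Q (fun j => w j + w' j) <= Q w + Q w'.
Hypothesis QZ : forall w a, 0 < a -> Q (fun j => a * w j) = a * Q w.
Implicit Types (A : pred T) (La w : T -> R) (i : T) (c : R).

Definition dotf La w := \sum_j La j * w j.
Definition supported A w := forall j, ~~ A j -> w j = 0.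
Definition dominated_on A La := forall w, supported A w -> dotf La w <= Q w.
Definition setf w i c : T -> R := fun j => if j == i then c else w j.
Definition unit_vec i : T -> R := setf (fun _ => 0) i 1.

Lemma dotfD La w w' : dotf La (fun j => w j + w' j) = dotf La w + dotf La w'.
Proof. by rewrite /dotf -big_split; apply: eq_bigr => j _; rewrite mulrDr. Qed.

Lemma dotfZ La w a : dotf La (fun j => a * w j) = a * dotf La w.
Proof. by rewrite /dotf mulr_sumr; apply: eq_bigr => j _; rewrite mulrCA. Qed.

Lemma dotf_setf La w i c : dotf (setf La i c) w = dotf La (setf w i 0) + c * w i.
Proof.
rewrite /dotf (bigD1 i) //= [in RHS](bigD1 i) //= /setf !eqxx mulr0 add0r addrC.
by congr (_ + _); apply: eq_bigr => j /negbTE ->.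
Qed.

Lemma setf_unit_vec w i : w = (fun j => setf w i 0 j + w i * unit_vec i j).
Proof.
apply: funext => j; rewrite /unit_vec /setf.
by case: eqP => [->|]; rewrite ?mulr1 ?mulr0 ?add0r ?addr0.
Qed.

(* Homogeneity reduces the one-dimensional extension to the vectors w +- unit_vec i. *)
Lemma dominated_on_setf A La i c : dominated_on A La ->
  (forall w, supported A w -> dotf La w - Q (fun j => w j - unit_vec i j) <= c) ->
  (forall w, supported A w -> c <= Q (fun j => w j + unit_vec i j) - dotf La w) ->
  dominated_on (predU1 i A) (setf La i c).
Proof.
move=> dom lo hi w supp_w; set w0 := setf w i 0.
have supp_w0 : supported A w0.
  move=> j Aj; rewrite /w0 /setf; case: eqP => // /eqP ji.
  by apply: supp_w; rewrite /= negb_or ji.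
have supp_scaled a : supported A (fun j => a * w0 j) by move=> j /supp_w0 ->; rewrite mulr0.
rewrite dotf_setf [in Q w](setf_unit_vec w i) -/w0; case: (ltgtP (w i) 0) => [wi_lt0|wi_gt0|->].
- have p_gt0 : 0 < - w i by rewrite oppr_gt0.
  have := lo _ (supp_scaled (- w i)^-1); rewrite dotfZ.
  have -> : Q (fun j => w0 j + w i * unit_vec i j)
          = - w i * Q (fun j => (- w i)^-1 * w0 j - unit_vec i j).
    rewrite -QZ //; congr Q; apply: funext => j.
    by rewrite mulrBr mulrA divff ?gt_eqF // mul1r mulNr opprK.
  move/(ler_wpM2l (ltW p_gt0)); rewrite mulrBr mulrA divff ?gt_eqF // mul1r; lra.
- have := hi _ (supp_scaled (w i)^-1); rewrite dotfZ.
  have -> : Q (fun j => w0 j + w i * unit_vec i j)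
          = w i * Q (fun j => (w i)^-1 * w0 j + unit_vec i j).
    rewrite -QZ //; congr Q; apply: funext => j.
    by rewrite mulrDr mulrA divff ?gt_eqF // mul1r.
  move/(ler_wpM2l (ltW wi_gt0)); rewrite mulrBr mulrA divff ?gt_eqF // mul1r; lra.
- rewrite mulr0 addr0; have -> : (fun j => w0 j + 0 * unit_vec i j) = w0.
    by apply: funext => j; rewrite mul0r addr0.
  exact: dom.
Qed.

Lemma dominated_on_extend A La i : dominated_on A La ->
  exists c, dominated_on (predU1 i A) (setf La i c).
Proof.
move=> dom; pose lower : set R := fun x => exists2 w, supported A w &
  x = dotf La w - Q (fun j => w j - unit_vec i j).
have lo_le_hi w w' : supported A w -> supported A w' ->
    dotf La w - Q (fun j => w j - unit_vec i j) <= Q (fun j => w' j + unit_vec i j) - dotf La w'.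
  move=> sw sw'; have := dom (fun j => w j + w' j).
  have /[swap]/[apply] : supported A (fun j => w j + w' j).
    by move=> j Aj; rewrite sw // sw' // addr0.
  have := QD (fun j => w j - unit_vec i j) (fun j => w' j + unit_vec i j).
  have -> : (fun j => w j - unit_vec i j + (w' j + unit_vec i j)) = (fun j => w j + w' j).
    by apply: funext => j; ring.
  by rewrite dotfD; lra.
have supp0 : supported A (fun _ => 0) by [].
have lower_sup : has_sup lower.
  split; first by eexists; exists (fun _ => 0).
  by exists (Q (fun j => 0 + unit_vec i j) - dotf La (fun _ => 0)) => _ [w sw ->]; exact: lo_le_hi.
exists (sup lower); apply: dominated_on_setf => // w sw.
  by apply: sup_upper_bound => //; exists w.
by apply: ge_sup; [case: lower_sup | move=> _ [w' sw' ->]; exact: lo_le_hi].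
Qed.

Lemma hahn_banach (S : pred T) lam : dominated_on S lam ->
  exists2 La, (forall j, S j -> La j = lam j) & forall w, dotf La w <= Q w.
Proof.
move=> dom; suff /(_ (enum T)) [La eq_lam domLa] : forall s : seq T,
    exists2 La, (forall j, S j -> La j = lam j) & dominated_on (fun j => S j || (j \in s)) La.
  by exists La => // w; apply: domLa => j; rewrite mem_enum orbT.
elim=> [|i s [La eq_lam domLa]].
  by exists lam => // w sw; apply: dom => j nSj; apply: sw; rewrite orbF.
case: (boolP (S i)) => [Si | nSi].
  exists La => // w sw; apply: domLa => j; rewrite negb_or => /andP[nSj njs].
  apply: sw; rewrite in_cons negb_or nSj /= negb_or njs andbT.
  by apply: contraNneq nSj => ->.
have [c domc] := dominated_on_extend i domLa.
exists (setf La i c) => [j Sj | w sw].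
  by rewrite /setf; case: eqP => [ji|_]; [move: nSi; rewrite -ji Sj | exact: eq_lam].
apply: domc => j; rewrite /= !negb_or => /and3P[nji nSj njs].
by apply: sw; rewrite in_cons !negb_or nji nSj njs.
Qed.

End HahnBanach.

Section ClarkeExtension.
Variables (R : realType) (n : nat) (Iz : {set 'I_n}) (h : ('I_n -> R) -> R)
  (xs : 'I_n -> R) (L : R).
Hypothesis h_lip : forall x y, same_z Iz x y -> `|h x - h y| <= L * vnorm (vsub x y).
Implicit Types (s v : 'I_n -> R).

Definition clarke_ext s := clarke_deriv Iz h xs (cont_part Iz s).

Lemma clarke_ext_cont_dir s : cont_dir Iz s -> clarke_ext s = clarke_deriv Iz h xs s.
Proof. by move=> cs; rewrite /clarke_ext cont_part_id. Qed.

Lemma clarke_ext0 s : (forall i, i \notin Iz -> s i = 0) -> clarke_ext s = 0.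
Proof.
move=> s0; rewrite /clarke_ext; set z := cont_part Iz s.
have z2 : vscale 2 z = z.
  apply: funext => i; rewrite /z /vscale /cont_part.
  by case: ifP => [_|/negbT/s0 ->]; rewrite mulr0.
by have := clarke_derivZ xs h_lip (cont_dir_cont_part s) (ltr0n R 2); rewrite -/z z2; lra.
Qed.

Lemma clarke_extZ s a : 0 < a -> clarke_ext (vscale a s) = a * clarke_ext s.
Proof.
by move=> a0; rewrite /clarke_ext cont_partZ (clarke_derivZ xs h_lip (cont_dir_cont_part _)).
Qed.

Lemma clarke_extD (s s' : 'I_n -> R) : clarke_ext (vadd s s') <= clarke_ext s + clarke_ext s'.
Proof.
by rewrite /clarke_ext cont_partD; apply: (clarke_derivD xs h_lip); exact: cont_dir_cont_part.
Qed.

Lemma clarke_ext_le s : 0 <= L -> clarke_ext s <= L * l1norm s.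
Proof.
move=> L0; apply: le_trans (clarke_deriv_le xs h_lip (cont_dir_cont_part s)) _.
apply: ler_wpM2l => //; apply: le_trans (vnorm_le_l1norm _) _.
by apply: ler_sum => i _; rewrite /cont_part; case: ifP; rewrite ?normr0.
Qed.

Lemma gen_grad_c_of_minorant v : (forall s, vdot v s <= clarke_ext s) -> gen_grad_c Iz h xs v.
Proof.
move=> minor; split=> [i iz | s cs].
  have ext_ei c : clarke_ext (fun j => if j == i then c else 0) = 0.
    by apply: clarke_ext0 => j jz; case: eqP => // ji; rewrite ji iz in jz.
  have := minor (fun j => if j == i then 1 else 0).
  have := minor (fun j => if j == i then -1 else 0).
  by rewrite /vdot !sum_mul_ifeq !ext_ei; lra.
apply/(clarke_geP xs h_lip _ cs); rewrite -clarke_ext_cont_dir //.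
by apply: le_trans (minor s); rewrite /vdot; under eq_bigr do rewrite mulrC.
Qed.

Lemma gen_grad_c_exists : exists v, gen_grad_c Iz h xs v.
Proof.
have [|v _ minor] := @hahn_banach R 'I_n clarke_ext clarke_extD
  (fun s a a0 => clarke_extZ s a0) pred0 (fun _ => 0).
  move=> w w0; rewrite /dotf big1 => [|j _]; last by rewrite mul0r.
  by rewrite clarke_ext0 // => j _; exact: w0.
by exists v; apply: gen_grad_c_of_minorant.
Qed.

End ClarkeExtension.

Section FeasibleDirections.
Variables (R : realType) (n : nat) (Iz : {set 'I_n}) (l u xs : 'I_n -> R).
Implicit Types (s d : 'I_n -> R) (z : R).

Lemma Dc0 : Dc Iz l u xs (fun _ => 0).
Proof. by split=> // i _; split=> _. Qed.

Lemma near_in_box d : in_box l u xs -> Dc Iz l u xs d ->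
  near0plus (fun t => in_box l u (vadd xs (vscale t d))).
Proof.
move=> xs_box [dz dsign]; apply: near0plus_all => i; have /andP[li ui] := xs_box i.
have i_cont : d i != 0 -> i \notin Iz by apply: contraNN => /dz ->.
have lo : d i < 0 -> 0 < xs i - l i.
  move=> di; rewrite subr_gt0 lt_neqAle li andbT; apply/eqP => e.
  by have := (dsign i (i_cont (ltr0_neq0 di))).1 (esym e); rewrite leNgt di.
have hi : - d i < 0 -> 0 < u i - xs i.
  rewrite oppr_lt0 => di; rewrite subr_gt0 lt_neqAle ui andbT; apply/eqP => e.
  by have := (dsign i (i_cont (lt0r_neq0 di))).2 e; rewrite leNgt di.
have l0 : 0 <= xs i - l i by rewrite subr_ge0.
have u0 : 0 <= u i - xs i by rewrite subr_ge0.
have [del del0 H] := near0plusI (near0plus_affine_ge0 l0 lo) (near0plus_affine_ge0 u0 hi).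
exists del => // t t0 tdel; have [] := H t t0 tdel.
by rewrite /vadd /vscale => lo' hi'; apply/andP; split; lra.
Qed.

Lemma near_in_ball d rho : 0 < rho ->
  near0plus (fun t => vnorm (vsub (vadd xs (vscale t d)) xs) <= rho).
Proof.
move=> rho0; have K0 : 0 < vnorm d + 1 by rewrite ltr_wpDl ?vnorm_ge0.
exists (rho / (vnorm d + 1)); first by rewrite divr_gt0.
move=> t t0; rewrite ltr_pdivlMr // vsub_vaddK vnormZ gtr0_norm // => ht.
by have := vnorm_ge0 d; nra.
Qed.

(* pen_coord i z is the distance from z to the set of values s i of the directions
   s in D^c(xs), and clamp i z is the nearest such value. *)
Definition pen_coord i z : R :=
  if i \in Iz then `|z| else if xs i == l i then (`|z| - z) / 2
  else if xs i == u i then (`|z| + z) / 2 else 0.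

Definition clamp i z : R :=
  if i \in Iz then 0 else if xs i == l i then (z + `|z|) / 2
  else if xs i == u i then (z - `|z|) / 2 else z.

Lemma pen_coordD i z z' : pen_coord i (z + z') <= pen_coord i z + pen_coord i z'.
Proof.
have := ler_normD z z'; have := ler_norm z; have := ler_norm z'; have := ler_norm (z + z').
have := ler_norm (- z); have := ler_norm (- z'); have := ler_norm (- (z + z')); rewrite !normrN.
by rewrite /pen_coord; case: ifP => _; last case: ifP => _; last case: ifP => _; lra.
Qed.

Lemma pen_coordZ i a z : 0 < a -> pen_coord i (a * z) = a * pen_coord i z.
Proof.
move=> a0; rewrite /pen_coord normrM (gtr0_norm a0).
case: ifP => _ //; case: ifP => _; first by rewrite mulrA -mulrBr.
by case: ifP => _; rewrite ?mulr0 // mulrA -mulrDr.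
Qed.

Lemma pen_coord_Dc s i : Dc Iz l u xs s -> pen_coord i (s i) = 0.
Proof.
move=> [sz ssign]; rewrite /pen_coord.
case: (boolP (i \in Iz)) => [/sz -> | iz]; first exact: normr0.
have [s_lo s_hi] := ssign i iz.
case: ifP => [/eqP/s_lo/ger0_norm -> | _]; first by rewrite subrr mul0r.
by case: ifP => [/eqP/s_hi/ler0_norm -> | _]; first by rewrite addNr mul0r.
Qed.

Lemma clamp_Dc b : (forall i, l i < u i) -> Dc Iz l u xs (fun i => clamp i (b i)).
Proof.
move=> lu; split=> [i iz | i iz]; first by rewrite /clamp iz.
have := ler_norm (b i); have := ler_norm (- b i); rewrite normrN /clamp (negbTE iz).
move=> bl bu; split=> e; first by rewrite e eqxx; lra.
by rewrite e (gt_eqF (lu i)) eqxx; lra.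
Qed.

Lemma normr_clamp_sub i z : `|clamp i z - z| <= pen_coord i z.
Proof.
have := ler_norm z; have := ler_norm (- z); rewrite normrN /clamp /pen_coord => zl zu.
case: ifP => _; first by rewrite sub0r normrN.
case: ifP => _; last case: ifP => _; rewrite ?subrr ?normr0 //.
  by rewrite ler_norml; apply/andP; split; lra.
by rewrite ler_norml; apply/andP; split; lra.
Qed.

End FeasibleDirections.

Section ParetoStationarity.
Variables (R : realType) (n q m : nat) (Iz : {set 'I_n}) (l u : 'I_n -> R)
  (F : 'I_q -> ('I_n -> R) -> R) (g : 'I_m -> ('I_n -> R) -> R) (xs : 'I_n -> R).
Hypothesis q_gt0 : (0 < q)%N.
Hypothesis lu : forall i, l i < u i.
Hypothesis xs_feas : feasible Iz l u g xs.

Local Notation fidx := ('I_q + 'I_m)%type.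

Definition fn (k : fidx) := match k with inl i => F i | inr j => g j end.
Definition active (k : fidx) : bool := if k is inr j then g j xs == 0 else true.
Definition k0 : fidx := inl (Ordinal q_gt0).

Variable Lk : fidx -> R.
Hypothesis Lk_ge0 : forall k, 0 <= Lk k.
Hypothesis fn_lip : forall k x y, same_z Iz x y -> `|fn k x - fn k y| <= Lk k * vnorm (vsub x y).

Definition dk k := clarke_ext Iz (fn k) xs.

Lemma dk0 k s : (forall i, s i = 0) -> dk k s = 0.
Proof. by move=> s0; apply: (clarke_ext0 xs (fn_lip k)) => i _. Qed.

Lemma strict_descent_better y : same_z Iz y xs -> in_box l u y ->
    (forall k, active k -> fn k y < fn k xs) -> (forall j, ~~ active (inr j) -> g j y < 0) ->
  feasible Iz l u g y /\ vle (Fval F y) (Fval F xs).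
Proof.
move=> yz ybox desc inact; have [_ xs_int xs_g] := xs_feas; split.
  split=> // [i iz | j]; first by rewrite yz //; exact: xs_int.
  case: (boolP (active (inr j))) => [aj | /inact/ltW //].
  by rewrite -(eqP aj); exact: ltW (desc (inr j) aj).
split=> [i | FyF]; first exact: ltW (desc (inl i) isT).
have := congr1 (fun f => f (Ordinal q_gt0)) FyF; rewrite /Fval /= => /eqP.
by rewrite lt_eqF // (desc (inl _) isT).
Qed.

Hypothesis xs_loc : exists rho : R, 0 < rho /\
  ~ exists y, Bc Iz l u xs rho y /\ feasible Iz l u g y /\ vle (Fval F y) (Fval F xs).

Lemma active_clarke_nonneg d : Dc Iz l u xs d -> exists2 k, active k & 0 <= dk k d.
Proof.
move=> dDc; apply: contrapT => no_k.
have dec k : active k -> dk k d < 0.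
  by move=> ak; rewrite ltNge; apply/negP => dk_ge0; apply: no_k; exists k.
have [dz _] := dDc; have [xs_box _ xs_g] := xs_feas; have [rho [rho0 no_y]] := xs_loc.
pose y t := vadd xs (vscale t d).
have N1 : near0plus (fun t => forall k, active k -> fn k (y t) < fn k xs).
  apply: near0plus_all => k; apply: near0plus_imply => ak.
  by apply: (clarke_deriv_lt0_decrease (fn_lip k) dz); rewrite -clarke_ext_cont_dir // dec.
have N2 : near0plus (fun t => forall j, ~~ active (inr j) -> g j (y t) < 0).
  apply: near0plus_all => j; apply: near0plus_imply => /= gj_ne0.
  by apply: (lipschitz_lt0_near (fn_lip (inr j)) dz); rewrite lt_neqAle gj_ne0 xs_g.
have [t _ [[desc inact] [ybox ynear]]] := near0plus_witness
  (near0plusI (near0plusI N1 N2)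
              (near0plusI (near_in_box xs_box dDc) (near_in_ball xs d rho0))).
have [y_feas y_better] := strict_descent_better (same_z_vadd xs t dz) ybox desc inact.
by apply: no_y; exists (y t); split=> //; split=> //; exact: same_z_vadd.
Qed.

Definition Lsum := \sum_k Lk k.
Definition penalty b := Lsum * \sum_i pen_coord Iz l u xs i (b i).

Lemma dk_le k s : dk k s <= Lsum * l1norm s.
Proof.
apply: le_trans (clarke_ext_le xs (fn_lip k) s (Lk_ge0 k)) _.
apply: ler_wpM2r; first exact: l1norm_ge0.
by rewrite /Lsum (bigD1 k) //= lerDl; apply: sumr_ge0 => k' _.
Qed.

(* Apply active_clarke_nonneg to the clamped direction; the error costs at most the penalty. *)
Lemma active_clarke_penalty_nonneg b : exists2 k, active k & 0 <= dk k b + penalty b.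
Proof.
set c := fun i => clamp Iz l u xs i (b i).
have [k ak dk_c] := active_clarke_nonneg (clamp_Dc Iz xs b lu).
exists k => //; have := clarke_extD xs (fn_lip k) b (vsub c b).
have -> : vadd b (vsub c b) = c by apply: funext => i; rewrite /vadd /vsub addrC subrK.
have : Lsum * l1norm (vsub c b) <= penalty b.
  apply: ler_wpM2l; first exact: sumr_ge0.
  by apply: ler_sum => i _; exact: normr_clamp_sub.
by have := dk_le k (vsub c b); move: dk_c; rewrite /dk -/c; lra.
Qed.

Lemma penalty_Dc s : Dc Iz l u xs s -> penalty s = 0.
Proof. by move=> sDc; rewrite /penalty big1 ?mulr0 // => i _; exact: pen_coord_Dc. Qed.

Definition maxact (f : fidx -> R) := \big[Order.max/f k0]_(k | active k) f k.

Lemma le_maxact f k : active k -> f k <= maxact f.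
Proof. exact: le_bigmax_cond. Qed.

Lemma maxact_le f c : (forall k, active k -> f k <= c) -> maxact f <= c.
Proof. by move=> fc; apply: bigmax_le => //; exact: fc. Qed.

Lemma maxactZ f a : 0 < a -> maxact (fun k => a * f k) = a * maxact f.
Proof.
move=> a0; apply/eqP; rewrite eq_le; apply/andP; split.
  by apply: maxact_le => k ak; rewrite ler_pM2l // le_maxact.
rewrite -ler_pdivlMl //; apply: maxact_le => k ak.
by rewrite ler_pdivlMl // (le_maxact (fun k => a * f k)).
Qed.

Lemma maxact_weights (mu : fidx -> R) : (forall r, \sum_k mu k * r k <= maxact r) ->
  [/\ forall k, 0 <= mu k, forall k, ~~ active k -> mu k = 0 & \sum_k mu k = 1].
Proof.
move=> dom; have dom_delta k a : mu k * a <= maxact (fun k' => if k' == k then a else 0).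
  by rewrite -sum_mul_ifeq; exact: dom.
have mu_ge0 k : 0 <= mu k.
  have : maxact (fun k' => if k' == k then -1 else 0) <= 0.
    by apply: maxact_le => k' _; case: eqP => _; rewrite ?oppr_le0.
  by have := dom_delta k (-1); lra.
split=> // [k nak|].
  apply/eqP; rewrite eq_le mu_ge0 andbT; have : maxact (fun k' => if k' == k then 1 else 0) <= 0.
    by apply: maxact_le => k' ak'; case: eqP => [e|_] //; move: nak; rewrite -e ak'.
  by have := dom_delta k 1; lra.
have := dom (fun _ => 1); have := dom (fun _ => -1).
rewrite (eq_bigr _ (fun k _ => mulr1 (mu k))) (eq_bigr _ (fun k _ => mulrN1 (mu k))) sumrN.
have : maxact (fun _ => 1) <= 1 by apply: maxact_le.
have : maxact (fun _ => -1) <= -1 by apply: maxact_le.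
lra.
Qed.

Definition ptype := ((fidx * 'I_n) + (fidx + 'I_n))%type.
Definition cpart (w : ptype -> R) k i := w (inl (k, i)).
Definition rpart (w : ptype -> R) k := w (inr (inl k)).
Definition bpart (w : ptype -> R) i := w (inr (inr i)).
Definition mkw (c : fidx -> 'I_n -> R) (r : fidx -> R) (b : 'I_n -> R) : ptype -> R :=
  fun j => match j with inl ki => c ki.1 ki.2 | inr (inl k) => r k | inr (inr i) => b i end.

(* On the b-coordinates alone it is nonnegative (active_clarke_penalty_nonneg); a linear
   functional below it carries the Lagrange multipliers in its c- and r-coordinates. *)
Definition penalized_max w :=
  maxact (fun k => dk k (vadd (cpart w k) (bpart w)) + rpart w k) + penalty (bpart w).

Lemma penalized_maxD w w' :
  penalized_max (fun j => w j + w' j) <= penalized_max w + penalized_max w'.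
Proof.
rewrite /penalized_max addrACA; apply: lerD.
  apply: maxact_le => k ak; apply: le_trans (lerD (le_maxact _ ak) (le_maxact _ ak)).
  have := clarke_extD xs (fn_lip k) (vadd (cpart w k) (bpart w)) (vadd (cpart w' k) (bpart w')).
  have -> : vadd (vadd (cpart w k) (bpart w)) (vadd (cpart w' k) (bpart w'))
          = vadd (cpart (fun j => w j + w' j) k) (bpart (fun j => w j + w' j)).
    by apply: funext => i; rewrite /vadd /cpart /bpart; ring.
  by rewrite /dk /rpart; lra.
rewrite /penalty -mulrDr -big_split; apply: ler_wpM2l; first exact: sumr_ge0.
by apply: ler_sum => i _; exact: pen_coordD.
Qed.

Lemma penalized_maxZ w a : 0 < a -> penalized_max (fun j => a * w j) = a * penalized_max w.
Proof.
move=> a0; rewrite /penalized_max mulrDr -maxactZ //; congr (maxact _ + _).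
  apply: funext => k; rewrite mulrDr -(clarke_extZ xs (fn_lip k) _ a0).
  congr (clarke_ext _ _ _ _ + _).
  by apply: funext => i; rewrite /vadd /vscale mulrDr.
rewrite /penalty mulrCA; congr (_ * _); rewrite mulr_sumr.
by apply: eq_bigr => i _; exact: pen_coordZ.
Qed.

Lemma dotf_mkw La c r b : dotf La (mkw c r b) =
  \sum_k \sum_i cpart La k i * c k i + \sum_k rpart La k * r k + \sum_i bpart La i * b i.
Proof.
rewrite /dotf big_sumType /= big_sumType /= pair_bigA /= addrA.
by congr (_ + _ + _); apply: eq_bigr => -[].
Qed.

Lemma multipliers_dominated : exists2 La : ptype -> R, (forall i, bpart La i = 0) &
  forall c r b, \sum_k \sum_i cpart La k i * c k i + \sum_k rpart La k * r k
    <= maxact (fun k => dk k (vadd (c k) b) + r k) + penalty b.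
Proof.
pose S (j : ptype) := if j is inr (inr _) then true else false.
have [|La La_b dom] :=
  @hahn_banach _ _ _ penalized_maxD (fun w a a0 => penalized_maxZ w a0) S (fun _ => 0).
  move=> w sw; rewrite /dotf big1 => [|j _]; last by rewrite mul0r.
  have [k ak] := active_clarke_penalty_nonneg (bpart w); move/le_trans; apply.
  apply: lerD (lexx _); apply: le_trans (le_maxact _ ak).
  have -> : vadd (cpart w k) (bpart w) = bpart w.
    by apply: funext => i; rewrite /vadd /cpart sw // add0r.
  by rewrite /rpart sw // addr0.
have La_b' i : bpart La i = 0 by exact: (La_b (inr (inr i))).
exists La => // c r b; have b0 : \sum_i bpart La i * b i = 0.
  by apply: big1 => i _; rewrite La_b' mul0r.
by have := dom (mkw c r b); rewrite dotf_mkw b0 addr0.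
Qed.

Section Multipliers.
Variable La : ptype -> R.
Hypothesis La_dom : forall c r b, \sum_k \sum_i cpart La k i * c k i + \sum_k rpart La k * r k
  <= maxact (fun k => dk k (vadd (c k) b) + r k) + penalty b.

Lemma multiplier_weights : [/\ forall k, 0 <= rpart La k,
  forall k, ~~ active k -> rpart La k = 0 & \sum_k rpart La k = 1].
Proof.
apply: maxact_weights => r; have := La_dom (fun _ _ => 0) r (fun _ => 0).
rewrite big1 ?add0r => [|k _]; last by apply: big1 => i _; rewrite mulr0.
rewrite penalty_Dc ?Dc0 // addr0; congr (_ <= maxact _); apply: funext => k.
by rewrite dk0 ?add0r // => i; rewrite /vadd addr0.
Qed.

Lemma multiplier_subgrad k s : vdot (cpart La k) s <= rpart La k * dk k s.
Proof.
have := La_dom (fun k' i => if k' == k then s i else 0)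
  (fun k' => if k' == k then - dk k s else 0) (fun _ => 0).
rewrite exchange_big /=; under eq_bigr do rewrite sum_mul_ifeq; rewrite sum_mul_ifeq.
rewrite penalty_Dc ?Dc0 // addr0 /vdot.
have : maxact (fun k' => dk k' (vadd (fun i => if k' == k then s i else 0) (fun _ => 0))
                        + (if k' == k then - dk k s else 0)) <= 0.
  apply: maxact_le => k' _; case: eqP => [-> | _].
    have -> : vadd (fun i => s i) (fun _ => 0) = s by apply: funext => i; rewrite /vadd addr0.
    by rewrite subrr.
  by rewrite dk0 ?addr0 // => i; rewrite /vadd addr0.
by rewrite mulrN; lra.
Qed.

Lemma multiplier_zero_weight k : rpart La k = 0 -> forall i, cpart La k i = 0.
Proof.
move=> mu0 i; have := multiplier_subgrad k (fun j => if j == i then 1 else 0).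
have := multiplier_subgrad k (fun j => if j == i then -1 else 0).
by rewrite /vdot !sum_mul_ifeq mu0 !mul0r; lra.
Qed.

Lemma multiplier_Dc s : Dc Iz l u xs s -> 0 <= \sum_k vdot (cpart La k) s.
Proof.
move=> sDc; have := La_dom (fun _ i => - s i) (fun _ => 0) s.
have -> : \sum_k rpart La k * 0 = 0 by rewrite big1 // => k _; rewrite mulr0.
have -> : \sum_k \sum_i cpart La k i * - s i = - \sum_k vdot (cpart La k) s.
  rewrite -sumrN; apply: eq_bigr => k _; rewrite /vdot -sumrN; apply: eq_bigr => i _; exact: mulrN.
have -> : maxact (fun k => dk k (vadd (fun i => - s i) s) + 0) = 0.
  have -> : (fun k => dk k (vadd (fun i => - s i) s) + 0) = fun _ => 0.
    by apply: funext => k; rewrite addr0 dk0 // => i; rewrite /vadd addNr.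
  by apply/eqP; rewrite eq_le maxact_le //= (le_maxact (fun _ => 0) (isT : active k0)).
by rewrite penalty_Dc // addr0; lra.
Qed.

End Multipliers.

Lemma clarke_multipliers : exists (mu : fidx -> R) (v : fidx -> 'I_n -> R),
  [/\ forall k, 0 <= mu k, forall k, ~~ active k -> mu k = 0, \sum_k mu k = 1,
      forall k, gen_grad_c Iz (fn k) xs (v k) &
      forall s, Dc Iz l u xs s -> 0 <= \sum_k mu k * vdot (v k) s].
Proof.
have [La _ La_dom] := multipliers_dominated.
have [mu_ge0 mu_inact mu_sum] := multiplier_weights La_dom.
have [xi xi_grad] := fin_all_exists (fun k => gen_grad_c_exists xs (fn_lip k)).
pose v k := if 0 < rpart La k then (fun i => cpart La k i / rpart La k) else xi k.
have mu_v k i : rpart La k * v k i = cpart La k i.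
  rewrite /v; case: ifP => [mu_gt0 | /negbT]; first by rewrite mulrCA divff ?gt_eqF // mulr1.
  rewrite -leNgt => mu_le0; have mu0 : rpart La k = 0 by apply/eqP; rewrite eq_le mu_le0 mu_ge0.
  by rewrite mu0 mul0r multiplier_zero_weight.
exists (rpart La), v; split=> // [k | s sDc].
  have [mu_gt0 | mu_le0] := ltP 0 (rpart La k); last by rewrite /v ltNge mu_le0; exact: xi_grad.
  apply: (gen_grad_c_of_minorant (fn_lip k)) => s; rewrite -(ler_pM2l mu_gt0).
  apply: le_trans (multiplier_subgrad La_dom k s); rewrite /vdot mulr_sumr le_eqVlt.
  by apply/orP; left; apply/eqP; apply: eq_bigr => i _; rewrite mulrA mu_v.
rewrite (eq_bigr (fun k => vdot (cpart La k) s)) ?multiplier_Dc // => k _.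
by rewrite /vdot mulr_sumr; apply: eq_bigr => i _; rewrite mulrA mu_v.
Qed.

(* If all weight sat on the constraints, the direction of the constraint qualification would
   make the weighted Clarke slope strictly negative along a direction of D^c(xs). *)
Lemma objective_weights_neq0 (mu : fidx -> R) (v : fidx -> 'I_n -> R) d :
    (forall k, 0 <= mu k) -> (forall k, ~~ active k -> mu k = 0) -> \sum_k mu k = 1 ->
    (forall j, active (inr j) -> vdot (v (inr j)) d < 0) ->
    0 <= \sum_k mu k * vdot (v k) d ->
  (fun i => mu (inl i)) <> (fun _ => 0).
Proof.
move=> mu_ge0 mu_inact mu_sum slope_lt0 slope_ge0 obj0.
have mu_obj0 i : mu (inl i) = 0 by have := congr1 (fun f => f i) obj0.
rewrite big_sumType big1 /= in mu_sum; last by move=> i _; rewrite mu_obj0.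
rewrite big_sumType big1 /= in slope_ge0; last by move=> i _; rewrite mu_obj0 mul0r.
rewrite add0r in mu_sum slope_ge0.
have [j0 mu_j0] : exists j, 0 < mu (inr j).
  apply: contrapT => no_pos; suff : \sum_j mu (inr j) <= 0 by rewrite mu_sum ler10.
  by apply: sumr_le0 => j _; rewrite leNgt; apply/negP => pos; apply: no_pos; exists j.
have act_j0 : active (inr j0) by apply: contraTT mu_j0 => /mu_inact ->; rewrite ltxx.
move: slope_ge0; rewrite (bigD1 j0) //=.
have : \sum_(j | j != j0) mu (inr j) * vdot (v (inr j)) d <= 0.
  apply: sumr_le0 => j _; case: (boolP (active (inr j))) => [aj | /mu_inact ->].
    exact: mulr_ge0_le0 (mu_ge0 _) (ltW (slope_lt0 j aj)).
  by rewrite mul0r.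
have : mu (inr j0) * vdot (v (inr j0)) d < 0 by rewrite pmulr_rlt0 // slope_lt0.
lra.
Qed.

Lemma pareto_clarke_stationary_of_cq :
    (exists d, Dc Iz l u xs d /\
       forall j, g j xs = 0 -> forall xi, gen_grad_c Iz (g j) xs xi -> vdot xi d < 0) ->
  pareto_clarke_stationary Iz l u F g xs.
Proof.
move=> [d [dDc cq]]; have [mu [v [mu_ge0 mu_inact mu_sum v_grad v_Dc]]] := clarke_multipliers.
split=> //; exists (fun i => mu (inl i)), (fun j => mu (inr j)); split=> //.
- apply: (objective_weights_neq0 mu_ge0 mu_inact mu_sum _ (v_Dc d dDc)) => j /eqP gj0.
  exact: cq gj0 _ (v_grad (inr j)).
- move=> j; split=> //; case: (boolP (active (inr j))) => [/eqP -> | /mu_inact ->].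
    exact: mulr0.
  exact: mul0r.
exists (fun i => v (inl i)), (fun j => v (inr j)); split=> [i | j | xi s sDc].
- exact: v_grad (inl i).
- exact: v_grad (inr j).
apply: le_trans (v_Dc s sDc) _; rewrite le_eqVlt; apply/orP; left; apply/eqP.
under eq_bigr do rewrite /vdot mulr_sumr.
rewrite exchange_big /=; apply: eq_bigr => i _.
rewrite big_sumType /= mulrDl !mulr_suml; congr (_ + _); apply: eq_bigr => k _; exact: mulrA.
Qed.

End ParetoStationarity.

Lemma lipschitz_c_nonneg (R : realType) (n : nat) (Iz : {set 'I_n}) (h : ('I_n -> R) -> R) :
  lipschitz_c Iz h ->
  exists L, 0 <= L /\ forall x y, same_z Iz x y -> `|h x - h y| <= L * vnorm (vsub x y).
Proof.
move=> [L h_lip]; exists `|L|; split=> // x y xy; apply: le_trans (h_lip x y xy) _.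
by apply: ler_wpM2r; [exact: vnorm_ge0 | exact: ler_norm].
Qed.

Unset Implicit Arguments.

Theorem mainTheorem1 (R : realType) (n q m : nat) (Iz : {set 'I_n})
  (l u : 'I_n -> R) (F : 'I_q -> ('I_n -> R) -> R) (g : 'I_m -> ('I_n -> R) -> R)
  (xs : 'I_n -> R) :
  (0 < q)%N ->
  Iz != set0 -> ~: Iz != set0 ->
  (forall i, l i < u i) ->
  (forall i, i \in Iz -> exists a b : int, l i = a%:~R /\ u i = b%:~R) ->
  (forall i, lipschitz_c Iz (F i)) ->
  (forall j, lipschitz_c Iz (g j)) ->
  local_pareto_opt Iz l u F g xs ->
  (exists d, Dc Iz l u xs d /\
     forall j, g j xs = 0 ->
       forall xi, gen_grad_c Iz (g j) xs xi -> vdot xi d < 0) ->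
  pareto_stationary Iz l u F g xs.
Proof.
move=> q_gt0 _ _ lu _ F_lip g_lip [xs_feas xs_disc xs_loc] cq; split=> //.
have fn_lip (k : ('I_q + 'I_m)%type) : lipschitz_c Iz (fn F g k) by case: k.
have [Lk Lk_spec] := fin_all_exists (fun k => lipschitz_c_nonneg (fn_lip k)).
exact: (pareto_clarke_stationary_of_cq q_gt0 lu xs_feas
  (fun k => (Lk_spec k).1) (fun k => (Lk_spec k).2) xs_loc cq).
Qed.
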